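(* Let $(\mathcal{C},\mathbb{E},\mathfrak{s})$ be an extriangulated category and $\mathcal{I}$ an ideal of $\mathcal{C}$. Consider: (a) there is an additive subfunctor $\mathbb{F}\subseteq\mathbb{E}$ having enough injective objects with $\mathcal{I}=\mathrm{Ph}(\mathbb{F})$; (a') there is an additive subfunctor $\mathbb{F}\subseteq\mathbb{E}$ having enough special injective objects with $\mathcal{I}=\mathrm{Ph}(\mathbb{F})$; (b) $\mathcal{I}$ is an object-special precovering ideal; (c) $\mathcal{I}^\star$ has enough special injective objects and $\mathcal{I}=\mathrm{Ph}(\mathcal{I}^\star)$; (d) $\mathcal{I}$ is a special precovering ideal and $\mathcal{I}^{\perp_{\mathbb{E}}}$ is an object ideal. Then: (I) if $\mathcal{C}$ has enough projective morphisms, (a) (and hence (a')) implies (b); (II) if $\mathcal{C}$ has enough injective objects, (b) implies (c); (III) if $\mathcal{C}$ has enough projective morphisms, (c) implies (d); (IV) (d) implies (b); (V) (c) implies (a').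
   Context: An extriangulated category $(\mathcal{C},\mathbb{E},\mathfrak{s})$ (Nakaoka–Palu): additive $\mathcal{C}$, biadditive $\mathbb{E}:\mathcal{C}^{\mathrm{op}}\times\mathcal{C}\to\mathrm{Ab}$, additive realization $\mathfrak{s}$ assigning to each $\delta\in\mathbb{E}(C,A)$ an equivalence class of sequences $A\to B\to C$, forming $\mathbb{E}$-triangles $A\to B\to C\overset{\delta}{\dashrightarrow}$, satisfying (ET1)–(ET4), (ET3)$^{\mathrm{op}}$, (ET4)$^{\mathrm{op}}$. Notation $a_\star\delta=\mathbb{E}(C,a)(\delta)$, $c^\star\delta=\mathbb{E}(c,A)(\delta)$; a morphism of $\mathbb{E}$-triangles is a commuting triple $(a,b,c)$ with $a_\star\delta=c^\star\delta'$. Enough injective objects: every $A$ admits an $\mathbb{E}$-triangle $A\to E\to C\overset{\delta}{\dashrightarrow}$ with $\mathbb{E}(-,E)=0$. Enough projective morphisms: every $C$ admits an $\mathbb{E}$-triangle $K\to P\xrightarrow{p}C\overset{\gamma}{\dashrightarrow}$ with $p^\star\delta=0$ for all $\delta\in\mathbb{E}(C,A)$. Ideal: class of morphisms with zeros, closed under sums and two-sided composition. Additive subfunctor $\mathbb{F}$: subgroups $\mathbb{F}(C,A)\subseteq\mathbb{E}(C,A)$ stable under $a_\star,c^\star$; $\mathbb{F}$-triangles have extension in $\mathbb{F}$, $\mathbb{F}$-inflations are their first morphisms. $\mathrm{Ph}(\mathbb{F})$: $\varphi:X\to C$ with $\varphi^\star\delta\in\mathbb{F}(X,A)$ for all $\delta\in\mathbb{E}(C,A)$.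 $\mathbb{F}\text{-}\mathrm{inj}$: $i:A\to Y$ with $i_\star\delta=0$ for all $\delta\in\mathbb{F}(C,A)$; an object $B$ is $\mathbb{F}$-injective if $\mathrm{id}_B\in\mathbb{F}\text{-}\mathrm{inj}$. $\mathbb{F}$ has enough injective objects: every $A$ admits an $\mathbb{F}$-triangle $A\xrightarrow{e}B\to C\overset{\delta}{\dashrightarrow}$ with $B$ $\mathbb{F}$-injective; enough special injective objects: moreover there is an $\mathbb{E}$-triangle $A\to B'\to C'\overset{\delta'}{\dashrightarrow}$ and a morphism $(\mathrm{id}_A,b,\varphi)$ from the former to it with $\varphi\in\mathrm{Ph}(\mathbb{F})$. $\mathcal{I}^\star(X,A)=\{i^\star\delta\mid i\in\mathcal{I}(X,C),\delta\in\mathbb{E}(C,A)\}$. $\mathcal{I}^{\perp_{\mathbb{E}}}=\{g:A\to Y\mid m^\star g_\star\delta=0\ \forall m\in\mathcal{I},\,m:X\to C,\ \forall\delta\in\mathbb{E}(C,A)\}$. For a class $\mathcal{K}$ of morphisms, $\mathrm{Ob}(\mathcal{K})=\{A\mid\mathrm{id}_A\in\mathcal{K}\}$, $\langle\mathcal{K}\rangle$ the smallest ideal containing $\mathcal{K}$; $\mathcal{K}$ is an object ideal if $\mathcal{K}=\langle\mathrm{Ob}(\mathcal{K})\rangle$; $A\in\mathcal{K}$ means $A\in\mathrm{Ob}(\mathcal{K})$. Special $\mathcal{I}$-precover of $C$: $i:X\to C$ in $\mathcal{I}$ with $\mathbb{E}$-triangles $A\to B\to C\overset{\delta}{\dashrightarrow}$,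 $A'\to X\xrightarrow{i}C\overset{\delta'}{\dashrightarrow}$ and a morphism $(j,b,\mathrm{id}_C)$ between them, $j\in\mathcal{I}^{\perp_{\mathbb{E}}}$. Object-special $\mathcal{I}$-precover of $C$: $i:X\to C$ in $\mathcal{I}$ with an $\mathbb{E}$-triangle $A\to X\xrightarrow{i}C\overset{\delta}{\dashrightarrow}$, $A\in\mathcal{I}^{\perp_{\mathbb{E}}}$. (Object-)special precovering ideal: every object has such a precover. *)

From HB Require Import structures.
From mathcomp Require Import all_boot all_algebra.
Set Implicit Arguments. Unset Strict Implicit. Unset Printing Implicit Defensive.
Import GRing.Theory.
Local Open Scope ring_scope.

(* Ext C A stands for E(C,A); pf a = a_star = E(C,a), pb c = c^star = E(c,A).
   realizes x y d  means  "A -x-> B -y-> C -d->" is an E-triangle,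
   i.e. the sequence (x,y) belongs to the class s(d). *)
Record PreExtri := {
  Obj : Type;
  Hom : Obj -> Obj -> zmodType;
  idm : forall A, Hom A A;
  comp : forall A B C, Hom B C -> Hom A B -> Hom A C;
  Ext : Obj -> Obj -> zmodType;
  pf : forall C A A', Hom A A' -> Ext C A -> Ext C A';
  pb : forall C' C A, Hom C' C -> Ext C A -> Ext C' A;
  realizes : forall A B C, Hom A B -> Hom B C -> Ext C A -> Prop
}.

Arguments idm {p} A.
Arguments comp {p A B C}.
Arguments pf {p C A A'}.
Arguments pb {p C' C A}.
Arguments realizes {p A B C}.

Section Extri.
Variable C : PreExtri.
Local Notation Ob := (Obj C).
Local Notation Hom := (@Hom C).
Local Notation Ext := (@Ext C).

Definition is_iso (A B : Ob) (f : Hom A B) :=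
  exists g : Hom B A, comp g f = idm A /\ comp f g = idm B.

Definition equiv_seq (A B B' Cc : Ob) (x : Hom A B) (y : Hom B Cc)
  (x' : Hom A B') (y' : Hom B' Cc) :=
  exists b : Hom B B', is_iso b /\ comp b x = x' /\ comp y' b = y.

Definition is_biprod (A1 A2 S : Ob) (i1 : Hom A1 S) (i2 : Hom A2 S)
  (p1 : Hom S A1) (p2 : Hom S A2) :=
  [/\ comp p1 i1 = idm A1, comp p2 i2 = idm A2, comp p1 i2 = 0,
      comp p2 i1 = 0 & comp i1 p1 + comp i2 p2 = idm S].

Definition tri_morph (A B Cc A' B' C' : Ob)
  (x : Hom A B) (y : Hom B Cc) (d : Ext Cc A)
  (x' : Hom A' B') (y' : Hom B' C') (d' : Ext C' A')
  (a : Hom A A') (b : Hom B B') (c : Hom Cc C') :=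
  [/\ comp b x = comp x' a, comp c y = comp y' b & pf a d = pb c d'].

Definition is_additive_cat :=
  [/\ (forall A B Cc D (h : Hom Cc D) (g : Hom B Cc) (f : Hom A B),
         comp h (comp g f) = comp (comp h g) f),
      (forall A B (f : Hom A B), comp (idm B) f = f),
      (forall A B (f : Hom A B), comp f (idm A) = f),
      (forall A B Cc (g g' : Hom B Cc) (f : Hom A B),
         comp (g + g') f = comp g f + comp g' f) &
      [/\ (forall A B Cc (g : Hom B Cc) (f f' : Hom A B),
         comp g (f + f') = comp g f + comp g f'),
      (exists Z : Ob, idm Z = 0) &
      (forall A1 A2 : Ob, exists S (i1 : Hom A1 S) (i2 : Hom A2 S)
         (p1 : Hom S A1) (p2 : Hom S A2), is_biprod i1 i2 p1 p2)]].

Definition ET1 :=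
  [/\ (forall Cc A A' (a a' : Hom A A') (d : Ext Cc A), pf (a + a') d = pf a d + pf a' d),
      (forall Cc A A' (a : Hom A A') (d d' : Ext Cc A), pf a (d + d') = pf a d + pf a d'),
      (forall C' Cc A (c c' : Hom C' Cc) (d : Ext Cc A), pb (c + c') d = pb c d + pb c' d),
      (forall C' Cc A (c : Hom C' Cc) (d d' : Ext Cc A), pb c (d + d') = pb c d + pb c d') &
      [/\ (forall Cc A (d : Ext Cc A), pf (idm A) d = d),
      (forall Cc A (d : Ext Cc A), pb (idm Cc) d = d),
      (forall Cc A A' A'' (a : Hom A A') (a' : Hom A' A'') (d : Ext Cc A),
         pf (comp a' a) d = pf a' (pf a d)),
      (forall C'' C' Cc A (c : Hom C' Cc) (c' : Hom C'' C') (d : Ext Cc A),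
         pb (comp c c') d = pb c' (pb c d)) &
      (forall C' Cc A A' (a : Hom A A') (c : Hom C' Cc) (d : Ext Cc A),
         pf a (pb c d) = pb c (pf a d))]].

Definition is_realization_classes :=
  [/\ (forall Cc A (d : Ext Cc A), exists B (x : Hom A B) (y : Hom B Cc), realizes x y d),
      (forall Cc A B B' (d : Ext Cc A) (x : Hom A B) (y : Hom B Cc)
         (x' : Hom A B') (y' : Hom B' Cc),
         realizes x y d -> realizes x' y' d -> equiv_seq x y x' y') &
      (forall Cc A B B' (d : Ext Cc A) (x : Hom A B) (y : Hom B Cc)
         (x' : Hom A B') (y' : Hom B' Cc),
         realizes x y d -> equiv_seq x y x' y' -> realizes x' y' d)].

Definition is_realization :=
  forall A B Cc A' B' C' (x : Hom A B) (y : Hom B Cc) (d : Ext Cc A)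
    (x' : Hom A' B') (y' : Hom B' C') (d' : Ext C' A')
    (a : Hom A A') (c : Hom Cc C'),
    realizes x y d -> realizes x' y' d' -> pf a d = pb c d' ->
    exists b : Hom B B', tri_morph x y d x' y' d' a b c.

Definition is_additive_realization :=
  (forall A Cc S (i1 : Hom A S) (i2 : Hom Cc S) (p1 : Hom S A) (p2 : Hom S Cc),
     is_biprod i1 i2 p1 p2 -> realizes i1 p2 (0 : Ext Cc A)) /\
  (forall A A' B B' Cc C' SA SB SC
     (iA : Hom A SA) (iA' : Hom A' SA) (pA : Hom SA A) (pA' : Hom SA A')
     (iB : Hom B SB) (iB' : Hom B' SB) (pB : Hom SB B) (pB' : Hom SB B')
     (iC : Hom Cc SC) (iC' : Hom C' SC) (pC : Hom SC Cc) (pC' : Hom SC C')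
     (x : Hom A B) (y : Hom B Cc) (d : Ext Cc A)
     (x' : Hom A' B') (y' : Hom B' C') (d' : Ext C' A'),
     is_biprod iA iA' pA pA' -> is_biprod iB iB' pB pB' -> is_biprod iC iC' pC pC' ->
     realizes x y d -> realizes x' y' d' ->
     realizes (comp iB (comp x pA) + comp iB' (comp x' pA'))
              (comp iC (comp y pB) + comp iC' (comp y' pB'))
              (pf iA (pb pC d) + pf iA' (pb pC' d'))).

Definition ET3 :=
  forall A B Cc A' B' C' (x : Hom A B) (y : Hom B Cc) (d : Ext Cc A)
    (x' : Hom A' B') (y' : Hom B' C') (d' : Ext C' A')
    (a : Hom A A') (b : Hom B B'),
    realizes x y d -> realizes x' y' d' -> comp b x = comp x' a ->
    exists c : Hom Cc C', tri_morph x y d x' y' d' a b c.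

Definition ET3op :=
  forall A B Cc A' B' C' (x : Hom A B) (y : Hom B Cc) (d : Ext Cc A)
    (x' : Hom A' B') (y' : Hom B' C') (d' : Ext C' A')
    (b : Hom B B') (c : Hom Cc C'),
    realizes x y d -> realizes x' y' d' -> comp c y = comp y' b ->
    exists a : Hom A A', tri_morph x y d x' y' d' a b c.

Definition ET4 :=
  forall A B D Cc F (f : Hom A B) (f' : Hom B D) (d : Ext D A)
    (g : Hom B Cc) (g' : Hom Cc F) (d' : Ext F B),
    realizes f f' d -> realizes g g' d' ->
    exists E (h' : Hom Cc E) (d'' : Ext E A) (dd : Hom D E) (e : Hom E F),
      [/\ realizes (comp g f) h' d'',
          realizes dd e (pf f' d'),
          pb dd d'' = d,
          pf f d'' = pb e d' &
          [/\ comp dd f' = comp h' g & comp e h' = g']].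

Definition ET4op :=
  forall A B D Cc F (f' : Hom D B) (f : Hom B A) (d : Ext A D)
    (g' : Hom F Cc) (g : Hom Cc B) (d' : Ext B F),
    realizes f' f d -> realizes g' g d' ->
    exists E (h' : Hom E Cc) (d'' : Ext A E) (dd : Hom E D) (e : Hom F E),
      [/\ realizes h' (comp f g) d'',
          realizes e dd (pb f' d'),
          pf dd d'' = d,
          pb f d'' = pf e d' &
          [/\ comp f' dd = comp g h' & comp h' e = g']].

Definition is_extriangulated :=
  [/\ is_additive_cat, ET1, is_realization_classes, is_realization &
      [/\ is_additive_realization, ET3, ET3op, ET4 & ET4op]].

Definition MorClass := forall X Y : Ob, Hom X Y -> Prop.
Definition ExtClass := forall Cc A : Ob, Ext Cc A -> Prop.

Definition is_ideal (I : MorClass) :=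
  [/\ (forall X Y, I X Y 0),
      (forall X Y (f g : Hom X Y), I X Y f -> I X Y g -> I X Y (f + g)) &
      (forall W X Y Z (h : Hom Y Z) (f : Hom X Y) (g : Hom W X),
         I X Y f -> I W Z (comp h (comp f g)))].

Definition is_add_subfunctor (F : ExtClass) :=
  [/\ (forall Cc A, F Cc A 0),
      (forall Cc A (d d' : Ext Cc A), F Cc A d -> F Cc A d' -> F Cc A (d - d')),
      (forall Cc A A' (a : Hom A A') (d : Ext Cc A), F Cc A d -> F Cc A' (pf a d)) &
      (forall C' Cc A (c : Hom C' Cc) (d : Ext Cc A), F Cc A d -> F C' A (pb c d))].

Definition Ph (F : ExtClass) : MorClass :=
  fun X Cc (phi : Hom X Cc) => forall A (d : Ext Cc A), F X A (pb phi d).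

Definition Finj (F : ExtClass) : MorClass :=
  fun A Y (i : Hom A Y) => forall Cc (d : Ext Cc A), F Cc A d -> pf i d = 0.

Definition ObC (K : MorClass) (A : Ob) : Prop := K A A (idm A).

Definition F_injective_obj (F : ExtClass) (B : Ob) := ObC (Finj F) B.

Definition has_enough_inj (F : ExtClass) :=
  forall A : Ob, exists B Cc (e : Hom A B) (y : Hom B Cc) (d : Ext Cc A),
    [/\ realizes e y d, F Cc A d & F_injective_obj F B].

Definition has_enough_special_inj (F : ExtClass) :=
  forall A : Ob, exists B Cc (e : Hom A B) (y : Hom B Cc) (d : Ext Cc A),
    [/\ realizes e y d, F Cc A d, F_injective_obj F B &
      exists B' C' (e' : Hom A B') (y' : Hom B' C') (d' : Ext C' A)
        (b : Hom B B') (phi : Hom Cc C'),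
        [/\ realizes e' y' d', tri_morph e y d e' y' d' (idm A) b phi &
            Ph F phi]].

Definition Istar (I : MorClass) : ExtClass :=
  fun X A (eps : Ext X A) =>
    exists Cc (i : Hom X Cc) (d : Ext Cc A), I X Cc i /\ eps = pb i d.

Definition Iperp (I : MorClass) : MorClass :=
  fun A Y (g : Hom A Y) =>
    forall X Cc (m : Hom X Cc), I X Cc m -> forall d : Ext Cc A, pb m (pf g d) = 0.

Definition gen_obj (S : Ob -> Prop) : MorClass :=
  fun X Y f => forall J : MorClass, is_ideal J ->
    (forall A, S A -> J A A (idm A)) -> J X Y f.

Definition is_object_ideal (K : MorClass) :=
  forall X Y (f : Hom X Y), K X Y f <-> gen_obj (ObC K) f.

Definition special_precover (I : MorClass) (Cc : Ob) :=
  exists X (i : Hom X Cc), I X Cc i /\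
    exists A B (x : Hom A B) (y : Hom B Cc) (d : Ext Cc A)
      A' (x' : Hom A' X) (d' : Ext Cc A') (j : Hom A A') (b : Hom B X),
      [/\ realizes x y d, realizes x' i d',
          tri_morph x y d x' i d' j b (idm Cc) & Iperp I j].

Definition object_special_precover (I : MorClass) (Cc : Ob) :=
  exists X (i : Hom X Cc) A (x : Hom A X) (d : Ext Cc A),
    [/\ I X Cc i, realizes x i d & ObC (Iperp I) A].

Definition special_precovering (I : MorClass) := forall Cc, special_precover I Cc.
Definition object_special_precovering (I : MorClass) :=
  forall Cc, object_special_precover I Cc.

Definition enough_projective_morphisms :=
  forall Cc : Ob, exists K P (x : Hom K P) (p : Hom P Cc) (gam : Ext Cc K),
    realizes x p gam /\ forall A (d : Ext Cc A), pb p d = 0.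

Definition enough_injective_objects :=
  forall A : Ob, exists E Cc (x : Hom A E) (y : Hom E Cc) (d : Ext Cc A),
    realizes x y d /\ forall X (eps : Ext X E), eps = 0.

Definition same_class (I J : MorClass) := forall X Y (f : Hom X Y), I X Y f <-> J X Y f.

Definition cond_a (I : MorClass) :=
  exists F : ExtClass, [/\ is_add_subfunctor F, has_enough_inj F & same_class I (Ph F)].
Definition cond_a' (I : MorClass) :=
  exists F : ExtClass,
    [/\ is_add_subfunctor F, has_enough_special_inj F & same_class I (Ph F)].
Definition cond_b (I : MorClass) := object_special_precovering I.
Definition cond_c (I : MorClass) :=
  has_enough_special_inj (Istar I) /\ same_class I (Ph (Istar I)).
Definition cond_d (I : MorClass) :=
  special_precovering I /\ is_object_ideal (Iperp I).

End Extri.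

(* The argument runs on the long exact Hom-E sequences of an E-triangle.
   (a) => (b): push a triangle [K -> P -p-> C] with [p] a projective morphism along
   an F-inflation [K -> B] into an F-injective; the new deflation [X -> C] is an
   F-phantom and [B] lies in the right orthogonal of Ph(F) = I.
   (b) => (c): object-special precovers force Ph(I^star) = I.  For [A], pull an
   injective triangle [A -> E -> D] back along an object-special precover
   [A' -> X -i-> D]; an extension ending in the middle term [B] of
   [A -> B -> X] is a pushforward from [A'] plus a pullback of the precover's
   extension, and both die under I^star, so [B] is I^star-injective.
   (c) => (d): (c) => (a') => (a) => (b), and object-special precovers are special;
   a morphism in the orthogonal of I kills I^star-extensions, so it factors through
   an I^star-injective inflation, which makes that orthogonal an object ideal.
   (d) => (b): the orthogonal morphism [j] of a special precover factors as
   [A -k-> N -> A'] with [N] orthogonal, and realizing [k_* d] gives an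
   object-special precover. *)

From Pilot Require Import Defs.
From mathcomp Require Import all_boot all_algebra.
Set Implicit Arguments. Unset Strict Implicit. Unset Printing Implicit Defensive.
Import GRing.Theory.
Local Open Scope ring_scope.

Local Notation comp := Defs.comp.

Lemma morph_add0 (U V : zmodType) (f : U -> V) : {morph f : x y / x + y} -> f 0 = 0.
Proof. by move=> fD; apply: (@addrI _ (f 0)); rewrite -fD !addr0. Qed.

Lemma morph_addB (U V : zmodType) (f : U -> V) :
  {morph f : x y / x + y} -> {morph f : x y / x - y}.
Proof. by move=> fD x y; apply: (@addIr _ (f y)); rewrite -fD !subrK. Qed.

Section Extriangulated.
Variable C : PreExtri.
Hypothesis HC : is_extriangulated C.
Local Notation Ob := (Obj C).
Local Notation Hom := (@Defs.Hom C).
Local Notation Ext := (@Defs.Ext C).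
Implicit Types A B Cc D E W X Y Z : Ob.

Lemma compA A B Cc D (h : Hom Cc D) (g : Hom B Cc) (f : Hom A B) :
  comp h (comp g f) = comp (comp h g) f.
Proof. by case: HC => [[H _ _ _ _] _ _ _ _]; apply: H. Qed.

Lemma comp1m A B (f : Hom A B) : comp (idm B) f = f.
Proof. by case: HC => [[_ H _ _ _] _ _ _ _]; apply: H. Qed.

Lemma compm1 A B (f : Hom A B) : comp f (idm A) = f.
Proof. by case: HC => [[_ _ H _ _] _ _ _ _]; apply: H. Qed.

Lemma compDl A B Cc (g g' : Hom B Cc) (f : Hom A B) : comp (g + g') f = comp g f + comp g' f.
Proof. by case: HC => [[_ _ _ H _] _ _ _ _]; apply: H. Qed.

Lemma compDr A B Cc (g : Hom B Cc) (f f' : Hom A B) : comp g (f + f') = comp g f + comp g f'.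
Proof. by case: HC => [[_ _ _ _ [H _ _]] _ _ _ _]; apply: H. Qed.

Lemma zero_object : exists Z : Ob, idm Z = 0.
Proof. by case: HC => [[_ _ _ _ [_ H _]] _ _ _ _]. Qed.

Lemma biprod_ex A1 A2 : exists S (i1 : Hom A1 S) (i2 : Hom A2 S) (p1 : Hom S A1)
  (p2 : Hom S A2), is_biprod i1 i2 p1 p2.
Proof. by case: HC => [[_ _ _ _ [_ _ H]] _ _ _ _]. Qed.

Lemma comp0l A B Cc (f : Hom A B) : comp (0 : Hom B Cc) f = 0.
Proof. exact: (morph_add0 (f := fun g : Hom B Cc => comp g f) (fun g g' => compDl g g' f)). Qed.

Lemma comp0r A B Cc (g : Hom B Cc) : comp g (0 : Hom A B) = 0.
Proof. exact: (morph_add0 (compDr g)). Qed.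

Lemma pfDl Cc A A' (a a' : Hom A A') (d : Ext Cc A) : pf (a + a') d = pf a d + pf a' d.
Proof. by case: HC => [_ [H _ _ _ _] _ _ _]; apply: H. Qed.

Lemma pfDr Cc A A' (a : Hom A A') (d d' : Ext Cc A) : pf a (d + d') = pf a d + pf a d'.
Proof. by case: HC => [_ [_ H _ _ _] _ _ _]; apply: H. Qed.

Lemma pbDl C' Cc A (c c' : Hom C' Cc) (d : Ext Cc A) : pb (c + c') d = pb c d + pb c' d.
Proof. by case: HC => [_ [_ _ H _ _] _ _ _]; apply: H. Qed.

Lemma pbDr C' Cc A (c : Hom C' Cc) (d d' : Ext Cc A) : pb c (d + d') = pb c d + pb c d'.
Proof. by case: HC => [_ [_ _ _ H _] _ _ _]; apply: H. Qed.

Lemma pf1 Cc A (d : Ext Cc A) : pf (idm A) d = d.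
Proof. by case: HC => [_ [_ _ _ _ [H _ _ _ _]] _ _ _]; apply: H. Qed.

Lemma pb1 Cc A (d : Ext Cc A) : pb (idm Cc) d = d.
Proof. by case: HC => [_ [_ _ _ _ [_ H _ _ _]] _ _ _]; apply: H. Qed.

Lemma pf_comp Cc A A' A'' (a : Hom A A') (a' : Hom A' A'') (d : Ext Cc A) :
  pf (comp a' a) d = pf a' (pf a d).
Proof. by case: HC => [_ [_ _ _ _ [_ _ H _ _]] _ _ _]; apply: H. Qed.

Lemma pb_comp C'' C' Cc A (c : Hom C' Cc) (c' : Hom C'' C') (d : Ext Cc A) :
  pb (comp c c') d = pb c' (pb c d).
Proof. by case: HC => [_ [_ _ _ _ [_ _ _ H _]] _ _ _]; apply: H. Qed.

Lemma pf_pb C' Cc A A' (a : Hom A A') (c : Hom C' Cc) (d : Ext Cc A) :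
  pf a (pb c d) = pb c (pf a d).
Proof. by case: HC => [_ [_ _ _ _ [_ _ _ _ H]] _ _ _]; apply: H. Qed.

Lemma pf0l Cc A A' (d : Ext Cc A) : pf (0 : Hom A A') d = 0.
Proof. exact: (morph_add0 (f := fun a : Hom A A' => pf a d) (fun a a' => pfDl a a' d)). Qed.

Lemma pf0r Cc A A' (a : Hom A A') : pf a (0 : Ext Cc A) = 0.
Proof. exact: (morph_add0 (pfDr a)). Qed.

Lemma pb0l C' Cc A (d : Ext Cc A) : pb (0 : Hom C' Cc) d = 0.
Proof. exact: (morph_add0 (f := fun c : Hom C' Cc => pb c d) (fun c c' => pbDl c c' d)). Qed.

Lemma pb0r C' Cc A (c : Hom C' Cc) : pb c (0 : Ext Cc A) = 0.
Proof. exact: (morph_add0 (pbDr c)). Qed.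

Lemma pfBr Cc A A' (a : Hom A A') (d d' : Ext Cc A) : pf a (d - d') = pf a d - pf a d'.
Proof. exact: (morph_addB (pfDr a)). Qed.

Lemma pbBr C' Cc A (c : Hom C' Cc) (d d' : Ext Cc A) : pb c (d - d') = pb c d - pb c d'.
Proof. exact: (morph_addB (pbDr c)). Qed.

Lemma realizes_ex Cc A (d : Ext Cc A) : exists B (x : Hom A B) (y : Hom B Cc), realizes x y d.
Proof. by case: HC => [_ _ [H _ _] _ _]; apply: H. Qed.

Lemma realization_tri_morph A B Cc A' B' C' (x : Hom A B) (y : Hom B Cc) (d : Ext Cc A)
    (x' : Hom A' B') (y' : Hom B' C') (d' : Ext C' A') (a : Hom A A') (c : Hom Cc C') :
  realizes x y d -> realizes x' y' d' -> pf a d = pb c d' ->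
  exists b, tri_morph x y d x' y' d' a b c.
Proof. by case: HC => [_ _ _ H _]; apply: H. Qed.
Arguments realization_tri_morph {A B Cc A' B' C' x y d x' y' d'} a c.

Lemma ET3_tri_morph A B Cc A' B' C' (x : Hom A B) (y : Hom B Cc) (d : Ext Cc A)
    (x' : Hom A' B') (y' : Hom B' C') (d' : Ext C' A') (a : Hom A A') (b : Hom B B') :
  realizes x y d -> realizes x' y' d' -> comp b x = comp x' a ->
  exists c, tri_morph x y d x' y' d' a b c.
Proof. by case: HC => [_ _ _ _ [_ H _ _ _]]; apply: H. Qed.
Arguments ET3_tri_morph {A B Cc A' B' C' x y d x' y' d'} a b.

Lemma ET3op_tri_morph A B Cc A' B' C' (x : Hom A B) (y : Hom B Cc) (d : Ext Cc A)
    (x' : Hom A' B') (y' : Hom B' C') (d' : Ext C' A') (b : Hom B B') (c : Hom Cc C') :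
  realizes x y d -> realizes x' y' d' -> comp c y = comp y' b ->
  exists a, tri_morph x y d x' y' d' a b c.
Proof. by case: HC => [_ _ _ _ [_ _ H _ _]]; apply: H. Qed.
Arguments ET3op_tri_morph {A B Cc A' B' C' x y d x' y' d'} b c.

Lemma realizes_biprod A Cc S (i1 : Hom A S) (i2 : Hom Cc S) (p1 : Hom S A) (p2 : Hom S Cc) :
  is_biprod i1 i2 p1 p2 -> realizes i1 p2 (0 : Ext Cc A).
Proof. by case: HC => [_ _ _ _ [[H _] _ _ _ _]]; apply: H. Qed.

Lemma realizes_zero_id W : exists Z, realizes (0 : Hom Z W) (idm W) (0 : Ext W Z).
Proof.
have [Z Z0] := zero_object; exists Z.
apply: (@realizes_biprod _ _ _ _ (idm W) (0 : Hom W Z)).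
by split; rewrite ?comp0l ?comp0r ?comp1m ?add0r ?Z0.
Qed.

Lemma realizes_id_zero Y : exists Z, realizes (idm Y) (0 : Hom Y Z) (0 : Ext Z Y).
Proof.
have [Z Z0] := zero_object; exists Z.
apply: (@realizes_biprod _ _ _ _ (0 : Hom Z Y) (idm Y)).
by split; rewrite ?comp0l ?comp0r ?comp1m ?addr0 ?Z0.
Qed.

Lemma comp_deflation_inflation A B Cc (x : Hom A B) (y : Hom B Cc) (d : Ext Cc A) :
  realizes x y d -> comp y x = 0.
Proof.
move=> Hxy; have [Z HZ] := realizes_id_zero A.
have [|b [Hbx Hyb _]] := realization_tri_morph (idm A) (0 : Hom Z Cc) HZ Hxy.
  by rewrite pf0r pb0l.
by move: Hbx; rewrite !compm1 => <-; rewrite -Hyb comp0l.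
Qed.

Lemma pf_inflation_ext A B Cc (x : Hom A B) (y : Hom B Cc) (d : Ext Cc A) :
  realizes x y d -> pf x d = 0.
Proof.
move=> Hxy; have [Z HZ] := realizes_id_zero B.
have [|c [_ _ ->]] := ET3_tri_morph x (idm B) Hxy HZ; last by rewrite pb0r.
by rewrite comp1m.
Qed.

Lemma pb_deflation_ext A B Cc (x : Hom A B) (y : Hom B Cc) (d : Ext Cc A) :
  realizes x y d -> pb y d = 0.
Proof.
move=> Hxy; have [Z HZ] := realizes_zero_id B.
have [|a [_ _ <-]] := ET3op_tri_morph (idm B) y HZ Hxy; last by rewrite pf0r.
by rewrite compm1.
Qed.

Lemma factor_through_deflation A B Cc W (x : Hom A B) (y : Hom B Cc) (d : Ext Cc A)
    (c : Hom W Cc) :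
  realizes x y d -> pb c d = 0 -> exists b, c = comp y b.
Proof.
move=> Hxy Hc; have [Z HZ] := realizes_zero_id W.
have [|b [_ Hb _]] := realization_tri_morph (0 : Hom Z A) c HZ Hxy.
  by rewrite Hc pf0l.
by exists b; rewrite -Hb compm1.
Qed.

Lemma factor_through_inflation A B Cc Y (x : Hom A B) (y : Hom B Cc) (d : Ext Cc A)
    (a : Hom A Y) :
  realizes x y d -> pf a d = 0 -> exists b, comp b x = a.
Proof.
move=> Hxy Ha; have [Z HZ] := realizes_id_zero Y.
have [|b [Hb _ _]] := realization_tri_morph a (0 : Hom Cc Z) Hxy HZ.
  by rewrite Ha pb0l.
by exists b; rewrite Hb comp1m.
Qed.

Lemma exact_pb_deflation A B Cc A' (x : Hom A B) (y : Hom B Cc) (d : Ext Cc A)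
    (eps : Ext Cc A') :
  realizes x y d -> pb y eps = 0 -> exists f : Hom A A', eps = pf f d.
Proof.
move=> Hxy Hy; have [B' [x' [y' Hxy']]] := realizes_ex eps.
have [b Hb] := factor_through_deflation Hxy' Hy.
have [|a [_ _ Ha]] := ET3op_tri_morph b (idm Cc) Hxy Hxy'; first by rewrite comp1m.
by exists a; rewrite Ha pb1.
Qed.

Lemma exact_pf_inflation A B Cc W (x : Hom A B) (y : Hom B Cc) (d : Ext Cc A)
    (th : Ext W A) :
  realizes x y d -> pf x th = 0 -> exists h : Hom W Cc, th = pb h d.
Proof.
move=> Hxy Hx; have [B' [x' [y' Hxy']]] := realizes_ex th.
have [b Hb] := factor_through_inflation Hxy' Hx.
have [|c [_ _ Hc]] := ET3_tri_morph (idm A) b Hxy' Hxy; first by rewrite compm1.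
by exists c; rewrite -Hc pf1.
Qed.

(* (ET4) applied to [x] and a realization of [th] yields a triangle
   [Cc -> E -e-> W] realizing [y_* th] and some [d''] with [x_* d'' = e^* th];
   when [y_* th = 0] the deflation [e] has a section [sg], so [th = x_* (sg^* d'')]. *)
Lemma exact_pf_deflation A B Cc W (x : Hom A B) (y : Hom B Cc) (d : Ext Cc A)
    (th : Ext W B) :
  realizes x y d -> pf y th = 0 -> exists th' : Ext W A, th = pf x th'.
Proof.
move=> Hxy Hy; have [M [s [t Hst]]] := realizes_ex th.
have HET4 : ET4 C by case: HC => [_ _ _ _ []].
have [E [_ [d'' [dd [e [_ Hdd _ Hd _]]]]]] := HET4 _ _ _ _ _ _ _ _ _ _ _ Hxy Hst.
rewrite Hy in Hdd.
have [sg Hsg] := factor_through_deflation Hdd (pb0r _ (idm W)).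
by exists (pb sg d''); rewrite pf_pb Hd -pb_comp -Hsg pb1.
Qed.

Definition factors_through (S : Ob -> Prop) : MorClass C :=
  fun X Y f => exists N (k : Hom X N) (h : Hom N Y), S N /\ f = comp h k.

Lemma ideal_factors_through_ObC (K : MorClass C) :
  is_ideal K -> is_ideal (factors_through (ObC K)).
Proof.
case=> K0 KD Kcomp; split.
- move=> X Y; have [Z Z0] := zero_object.
  by exists Z, 0, 0; rewrite /ObC Z0 comp0l.
- move=> X Y _ _ [N1 [k1 [h1 [KN1 ->]]]] [N2 [k2 [h2 [KN2 ->]]]].
  have [S [j1 [j2 [p1 [p2 [H11 H22 H12 H21 HS]]]]]] := biprod_ex N1 N2.
  exists S, (comp j1 k1 + comp j2 k2), (comp h1 p1 + comp h2 p2); split.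
    rewrite /ObC -HS; apply: KD.
      by move: (Kcomp _ _ _ _ j1 _ p1 KN1); rewrite comp1m.
    by move: (Kcomp _ _ _ _ j2 _ p2 KN2); rewrite comp1m.
  rewrite compDr !compDl !compA -!(compA h1) -!(compA h2) H11 H22 H12 H21.
  by rewrite !comp0l !comp0r !comp1m addr0 add0r.
- move=> W X Y Z h _ g [N [k [h0 [KN ->]]]].
  by exists N, (comp k g), (comp h h0); rewrite !compA.
Qed.

Lemma gen_obj_factors_through (K : MorClass C) X Y (f : Hom X Y) :
  is_ideal K -> gen_obj (ObC K) f -> factors_through (ObC K) f.
Proof.
move=> HK /(_ _ (ideal_factors_through_ObC HK)); apply=> N KN.
by exists N, (idm N), (idm N); rewrite comp1m.
Qed.

Lemma gen_obj_ideal (K : MorClass C) X Y (f : Hom X Y) :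
  is_ideal K -> gen_obj (ObC K) f -> K X Y f.
Proof. by move=> HK; apply. Qed.

Lemma Ph_projective_pushout (F : ExtClass C) K P Cc B D X
    (x : Hom K P) (p : Hom P Cc) (gam : Ext Cc K)
    (e : Hom K B) (y : Hom B D) (del : Ext D K) (x' : Hom B X) (i : Hom X Cc) :
  is_add_subfunctor F -> realizes x p gam -> (forall A (d : Ext Cc A), pb p d = 0) ->
  realizes e y del -> F D K del -> realizes x' i (pf e gam) -> Ph F i.
Proof.
move=> [_ _ Fpf Fpb] Hxp Hp Hey Fdel Hx'i A d.
have [f ->] := exact_pb_deflation Hxp (Hp A d).
rewrite -pf_pb; apply: Fpf.
have [|h ->] := exact_pf_inflation (th := pb i gam) Hey; last exact: Fpb.
by rewrite pf_pb; apply: pb_deflation_ext Hx'i.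
Qed.

Lemma Iperp_ideal (I : MorClass C) : is_ideal (Iperp I).
Proof.
split.
- by move=> X Y X1 C1 m Im d; rewrite pf0l pb0r.
- move=> X Y f g Hf Hg X1 C1 m Im d.
  by rewrite pfDl pbDr (Hf _ _ _ Im) (Hg _ _ _ Im) addr0.
- move=> W X Y Z h f g Hf X1 C1 m Im d.
  by rewrite !pf_comp -pf_pb (Hf _ _ _ Im) pf0r.
Qed.

Lemma Iperp_Finj_Istar (I : MorClass C) A Y (g : Hom A Y) :
  Iperp I g <-> Finj (Istar I) g.
Proof.
split=> Hg.
- by move=> Cc _ [C1 [m [d [Im ->]]]]; rewrite pf_pb Hg.
- by move=> X Cc m Im d; rewrite -pf_pb; apply: Hg; exists Cc, m, d.
Qed.

Lemma Finj_Iperp (I : MorClass C) (F : ExtClass C) A Y (g : Hom A Y) :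
  same_class I (Ph F) -> Finj F g -> Iperp I g.
Proof. by move=> IF Hg X Cc m /IF Fm d; rewrite -pf_pb Hg. Qed.

Lemma object_special_precover_special (I : MorClass C) Cc :
  object_special_precover I Cc -> special_precover I Cc.
Proof.
move=> [X [i [A [x [d [Ii Hxi HA]]]]]]; exists X, i; split=> //.
exists A, X, x, i, d, A, x, d, (idm A), (idm X); split=> //.
by split; rewrite ?comp1m ?compm1 ?pf1 ?pb1.
Qed.

Lemma enough_special_inj_enough_inj (F : ExtClass C) :
  has_enough_special_inj F -> has_enough_inj F.
Proof.
move=> Fsp A; have [B [Cc [e [y [d [Hey Fd FB _]]]]]] := Fsp A.
by exists B, Cc, e, y, d.
Qed.

Lemma ext_injective_pullback_decomp A E D A' X B
    (x : Hom A E) (y : Hom E D) (eta : Ext D A) (x' : Hom A' X) (i : Hom X D)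
    (th : Ext D A') (e : Hom A B) (w : Hom B X) (b : Hom B E) :
  realizes x y eta -> (forall W (eps : Ext W E), eps = 0) -> realizes x' i th ->
  realizes e w (pb i eta) -> comp i w = comp y b ->
  exists f' f : Hom A' B, forall W (eps : Ext W B),
    exists (eps' : Ext W A') (h : Hom W D), eps = pf f' eps' + pf f (pb h th).
Proof.
move=> Hxy E0 Hx'i Hew Hb.
have [|f' Hf'] := factor_through_deflation (c := x') Hew.
  by rewrite -pb_comp (comp_deflation_inflation Hx'i) pb0l.
have [|f Hf] := exact_pb_deflation (eps := pf e eta) Hx'i.
  by rewrite -pf_pb (pf_inflation_ext Hew).
exists f', f => W eps.
have [|eps' Heps'] := exact_pf_deflation (th := pf w eps) Hx'i.
  by rewrite -pf_comp Hb pf_comp (E0 _ (pf b eps)) pf0r.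
have [|eps2 Heps2] := exact_pf_deflation (th := eps - pf f' eps') Hew.
  by rewrite pfBr -pf_comp -Hf' Heps' subrr.
have [h Hh] := exact_pf_inflation Hxy (E0 _ (pf x eps2)).
exists eps', h.
by rewrite pf_pb -Hf -pf_pb -Hh -Heps2 addrC subrK.
Qed.

Section Ideal.
Variable I : MorClass C.
Hypothesis HI : is_ideal I.

Lemma ideal_compr W X Y (f : Hom X Y) (g : Hom W X) : I f -> I (comp f g).
Proof. by case: HI => _ _ Icomp /(Icomp _ _ _ _ (idm Y) _ g); rewrite comp1m. Qed.

Lemma ideal_compl X Y Z (h : Hom Y Z) (f : Hom X Y) : I f -> I (comp h f).
Proof. by case: HI => _ _ Icomp /(Icomp _ _ _ _ h _ (idm X)); rewrite compm1. Qed.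

Lemma Istar_pb C' Cc A (c : Hom C' Cc) (d : Ext Cc A) : Istar I d -> Istar I (pb c d).
Proof.
by case=> [C1 [i [d1 [Ii ->]]]]; exists C1, (comp i c), d1; rewrite pb_comp; split=> //; apply: ideal_compr.
Qed.

Lemma Istar_pf Cc A A' (a : Hom A A') (d : Ext Cc A) : Istar I d -> Istar I (pf a d).
Proof. by case=> [C1 [i [d1 [Ii ->]]]]; exists C1, i, (pf a d1); rewrite pf_pb. Qed.

Lemma Istar_subfunctor : is_add_subfunctor (Istar I).
Proof.
split; [|move=> Cc A _ _ [C1 [i [d1 [Ii ->]]]] [C2 [i' [d2 [Ii' ->]]]] | |].
- by move=> Cc A; exists Cc, 0, 0; rewrite pb0r; case: HI.
- have [S [j1 [j2 [p1 [p2 [H11 H22 H12 H21 _]]]]]] := biprod_ex C1 C2.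
  exists S, (comp j1 i + comp j2 i'), (pb p1 d1 - pb p2 d2); split.
    by case: HI => _ ID _; apply: ID; apply: ideal_compl.
  rewrite pbDl !pb_comp !pbBr -(pb_comp p1 j1) -(pb_comp p2 j1) -(pb_comp p1 j2).
  rewrite -(pb_comp p2 j2) H11 H22 H12 H21.
  by rewrite !pb0l !pb1 !pb0r subr0 add0r.
- by move=> Cc A A' a d; apply: Istar_pf.
- by move=> C' Cc A c d; apply: Istar_pb.
Qed.

Lemma ideal_Ph_Istar X Cc (phi : Hom X Cc) : I phi -> Ph (Istar I) phi.
Proof. by move=> Iphi A d; exists Cc, phi, d. Qed.

Lemma Ph_Istar_ideal X Cc (phi : Hom X Cc) :
  object_special_precovering I -> Ph (Istar I) phi -> I phi.
Proof.
move=> /(_ Cc) [X0 [i [A [x [d [Ii Hxi HA]]]]]] /(_ A d) [C1 [j [d1 [Ij Hd]]]].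
have [|b ->] := factor_through_deflation (c := phi) Hxi; last exact: ideal_compr.
by rewrite Hd -(HA _ _ _ Ij d1) pf1.
Qed.

Lemma ObC_Iperp_pb0 A X Cc (m : Hom X Cc) (d : Ext Cc A) :
  ObC (Iperp I) A -> I m -> pb m d = 0.
Proof. by move=> IA Im; rewrite -(IA _ _ _ Im d) pf1. Qed.

Lemma cond_c_a' : cond_c I -> cond_a' I.
Proof. by case=> Iinj IPh; exists (Istar I); split=> //; apply: Istar_subfunctor. Qed.

Lemma cond_a'_a : cond_a' I -> cond_a I.
Proof.
by case=> F [HF Fsp IF]; exists F; split=> //; apply: enough_special_inj_enough_inj.
Qed.

Lemma cond_a_b : enough_projective_morphisms C -> cond_a I -> cond_b I.
Proof.
move=> Cproj [F [HF Finj IF]] Cc.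
have [K [P [x [p [gam [Hxp Hp]]]]]] := Cproj Cc.
have [B [D [e [y [del [Hey Fdel FB]]]]]] := Finj K.
have [X [x' [i Hx'i]]] := realizes_ex (pf e gam).
exists X, i, B, x', (pf e gam); split=> //.
- by apply/IF; apply: Ph_projective_pushout Hxp Hp Hey Fdel Hx'i.
- exact: Finj_Iperp IF FB.
Qed.

Lemma Iperp_object_ideal : has_enough_inj (Istar I) -> is_object_ideal (Iperp I).
Proof.
move=> Iinj X Y g; split=> [Ig|]; last exact: gen_obj_ideal (Iperp_ideal I).
have [B [D [e [y [del [Hey [C1 [m [d [Im Hdel]]]] IB]]]]]] := Iinj X.
have [|b <-] := factor_through_inflation (a := g) Hey.
  by rewrite Hdel pf_pb (Ig _ _ _ Im).
move=> J [_ _ Jcomp] JOb; rewrite -(comp1m e); apply: Jcomp; apply: JOb.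
exact/Iperp_Finj_Istar.
Qed.

Lemma cond_c_d : enough_projective_morphisms C -> cond_c I -> cond_d I.
Proof.
move=> Cproj Ic; split.
- move=> Cc; apply: object_special_precover_special.
  exact: cond_a_b Cproj (cond_a'_a (cond_c_a' Ic)) Cc.
- by apply: Iperp_object_ideal; apply: enough_special_inj_enough_inj; case: Ic.
Qed.

Lemma cond_d_b : cond_d I -> cond_b I.
Proof.
move=> [Isp Iobj] Cc.
have [X [i [Ii [A [B [x [y [d [A' [x' [d' [j [b [Hxy Hx'i [_ _ Hjd] Ij]]]]]]]]]]]]]] :=
  Isp Cc.
have [N [k [h [IN Hj]]]] := gen_obj_factors_through (Iperp_ideal I) (proj1 (Iobj _ _ j) Ij).
have [X2 [x2 [i2 Hx2i2]]] := realizes_ex (pf k d).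
have [|b2 [_ Hb2 _]] := realization_tri_morph h (idm Cc) Hx2i2 Hx'i.
  by rewrite -pf_comp -Hj Hjd.
exists X2, i2, N, x2, (pf k d); split=> //.
by rewrite -(comp1m i2) Hb2; apply: ideal_compr.
Qed.

Lemma cond_b_c : enough_injective_objects C -> cond_b I -> cond_c I.
Proof.
move=> Cinj Ib.
have IPh : same_class I (Ph (Istar I)).
  by move=> X Cc phi; split; [apply: ideal_Ph_Istar | apply: Ph_Istar_ideal].
split=> // A.
have [E [D [x [y [eta [Hxy E0]]]]]] := Cinj A.
have [X [i [A' [x' [th [Ii Hx'i IA']]]]]] := Ib D.
have [B [e [w Hew]]] := realizes_ex (pb i eta).
have [|b Hb] := realization_tri_morph (idm A) i Hew Hxy; first by rewrite pf1.
exists B, X, e, w, (pb i eta); split=> //.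
- by exists D, i, eta.
- apply/Iperp_Finj_Istar => Y Cc m Im eps; rewrite pf1.
  have [_ Hwb _] := Hb.
  have [f' [f Hdec]] := ext_injective_pullback_decomp Hxy E0 Hx'i Hew Hwb.
  have [eps' [h ->]] := Hdec _ eps.
  rewrite pbDr -!pf_pb -pb_comp (ObC_Iperp_pb0 _ IA' Im).
  by rewrite (ObC_Iperp_pb0 _ IA' (ideal_compl h Im)) !pf0r addr0.
- by exists E, D, x, y, eta, b, i; split=> //; apply/IPh.
Qed.

End Ideal.

End Extriangulated.

Theorem theorem5p5 (C : PreExtri) (HC : is_extriangulated C)
  (I : MorClass C) (HI : is_ideal I) :
  [/\ (enough_projective_morphisms C -> cond_a I -> cond_b I) /\
      (enough_projective_morphisms C -> cond_a' I -> cond_b I),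
      enough_injective_objects C -> cond_b I -> cond_c I,
      enough_projective_morphisms C -> cond_c I -> cond_d I,
      cond_d I -> cond_b I &
      cond_c I -> cond_a' I].
Proof.
split.
- split; first exact: cond_a_b.
  by move=> Cproj /cond_a'_a; apply: cond_a_b.
- exact: cond_b_c.
- exact: cond_c_d.
- exact: cond_d_b.
- exact: cond_c_a'.
Qed.
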